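(* There exists an absolute constant $C>0$ such that the following holds. Let $\mathcal J$ be a joint distribution of $(p_1,p_2,y)\in[0,1]\times[0,1]\times\{0,1\}$, let $\mathcal D_1$ be the distribution of $(p_1,y)$ and $\mathcal D_2$ the distribution of $(p_2,y)$. Then for every positive integer $m$, $$|\mathsf{SCDL}_m(\mathcal D_1)-\mathsf{SCDL}_m(\mathcal D_2)|\le C\,m\,\mathbb E_{\mathcal J}|p_1-p_2|.$$
   Context: For $x\in\mathbb R$ write $x_+=\max\{x,0\}$. For a distribution $\mathcal D$ of $(p,y)\in[0,1]\times\{0,1\}$, a positive integer $m$ and $i\in\{0,\ldots,m\}$, let $w_i(p)=(1-|mp-i|)_+$, $\pi_i=\mathbb E_{\mathcal D}[w_i(p)]$ and $q_i=\mathbb E_{\mathcal D}[w_i(p)y]/\pi_i$ (terms with $\pi_i=0$ are $0$). Define $$\mathsf{SCDL}_m(\mathcal D)=\max_{i=0,\ldots,m}\Big(\sum_{j=0}^{i}\pi_j\big(q_j-\tfrac{i+1}{m}\big)_+ +\sum_{j=i+1}^{m}\pi_j\big(\tfrac im-q_j\big)_+\Big).$$ *)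

From HB Require Import structures.
From mathcomp Require Import all_boot all_order all_algebra.
From mathcomp Require Import all_classical all_reals all_analysis.
Set Implicit Arguments. Unset Strict Implicit. Unset Printing Implicit Defensive.
Import Order.TTheory GRing.Theory Num.Theory.
Local Open Scope ring_scope.


(* A distribution D of (p,y) is represented as the law of a pair of random
   variables (p, y) on a probability space (T, P).  Expectation = real integral. *)
Definition Exp (R : realType) d (T : measurableType d) (P : probability T R) (f : T -> R) : R :=
  Rintegral P setT f.

Definition pos_part {R : realType} (x : R) : R := Num.max x 0.

Definition wgt (m i : nat) {R : realType} (p : R) : R := pos_part (1 - `|m%:R * p - i%:R|).

Definition pi_ (R : realType) d (T : measurableType d) (P : probability T R) (p : T -> R)
  (m i : nat) : R := Exp P (fun t => wgt m i (p t)).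

Definition q_ (R : realType) d (T : measurableType d) (P : probability T R) (p y : T -> R)
  (m i : nat) : R :=
  if pi_ P p m i == 0 then 0
  else Exp P (fun t => wgt m i (p t) * y t) / pi_ P p m i.

(* SCDL_m(D) = max_{i=0..m} ( sum_{j<=i} pi_j (q_j - (i+1)/m)_+
                             + sum_{j>i} pi_j (i/m - q_j)_+ ).
   All candidate values are >= 0, so folding max from 0 is the max over i. *)
Definition SCDL (R : realType) d (T : measurableType d) (P : probability T R) (p y : T -> R)
  (m : nat) : R :=
  \big[Num.max/0]_(i < m.+1)
    ( \sum_(j < m.+1 | (j <= i)%N)
         pi_ P p m j * pos_part (q_ P p y m j - (i.+1)%:R / m%:R)
    + \sum_(j < m.+1 | (i < j)%N)
         pi_ P p m j * pos_part (i%:R / m%:R - q_ P p y m j)).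

From HB Require Import structures.
From mathcomp Require Import all_boot all_order all_algebra.
From mathcomp Require Import all_classical all_reals all_analysis.
From mathcomp Require Import ring lra zify.
Import Order.TTheory GRing.Theory Num.Theory.
Local Open Scope ring_scope.
Local Open Scope classical_set_scope.
Set Implicit Arguments. Unset Strict Implicit.

(* Multiplying out the division, pi_j (q_j - c)_+ = (E[w_j(p) y] - c pi_j)_+ with
   0 <= c <= 2, and both expectations move by at most E|w_j(p1) - w_j(p2)| when p1
   is replaced by p2; so each of the two sums in a candidate value moves by at most
   3 sum_j E|w_j(p1) - w_j(p2)|.  Each w_j is m-Lipschitz and at a given point at
   most two consecutive w_j are nonzero, so that sum is at most 4 m E|p1 - p2|.
   The maximum over the candidates is 1-Lipschitz, whence C = 2 * 3 * 4 = 24. *)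

Section RealInequalities.
Variable R : realType.
Implicit Types a b c d u v K : R.

Lemma ler_dist_max a b c d K : `|a - c| <= K -> `|b - d| <= K ->
  `|Num.max a b - Num.max c d| <= K.
Proof.
rewrite !ler_norml => /andP[h1 h2] /andP[h3 h4].
by case: (leP a b); case: (leP c d) => *; apply/andP; split; lra.
Qed.

Lemma ler_dist_bigmax n (F G : 'I_n -> R) K : 0 <= K ->
  (forall i, `|F i - G i| <= K) ->
  `|\big[Num.max/0]_(i < n) F i - \big[Num.max/0]_(i < n) G i| <= K.
Proof.
move=> K0 FG; apply: (big_ind2 (fun u v => `|u - v| <= K)) => //.
- by rewrite subrr normr0.
- by move=> *; exact: ler_dist_max.
Qed.

Lemma pos_part_ge0 u : 0 <= pos_part u.
Proof. by rewrite /pos_part le_max lexx orbT. Qed.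

Lemma ler_dist_pos_part u v : `|pos_part u - pos_part v| <= `|u - v|.
Proof. by apply: ler_dist_max => //; rewrite subrr normr0. Qed.

Lemma pos_partMl a u : 0 <= a -> a * pos_part u = pos_part (a * u).
Proof. by move=> a0; rewrite /pos_part maxr_pMr // mulr0. Qed.

Lemma mulr_ratio a b : 0 <= a <= b -> b * (if b == 0 then 0 else a / b) = a.
Proof.
case/andP=> a0 ab; have [b0|b0] := eqVneq b 0; last by rewrite mulrCA divff ?mulr1.
by rewrite b0 mul0r in ab *; apply/le_anti; rewrite a0 ab.
Qed.

Lemma sum_mem_le n (s : seq nat) :
  \sum_(j < n) (((j : nat) \in s)%:R : R) <= (size s)%:R.
Proof.
rewrite -natr_sum ler_nat -big_mkcond /= sum1_card.
rewrite cardE -(size_map val).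
apply: uniq_leq_size; first by rewrite map_inj_uniq ?enum_uniq //; exact: val_inj.
by move=> _ /mapP[j + ->]; rewrite mem_enum.
Qed.

Lemma ler_dist_BM (a1 a2 b1 b2 c : R) : 0 <= c ->
  `|(a1 - c * b1) - (a2 - c * b2)| <= `|a1 - a2| + c * `|b1 - b2|.
Proof.
move=> c0; have -> : a1 - c * b1 - (a2 - c * b2) = (a1 - a2) - c * (b1 - b2) by ring.
by apply: le_trans (ler_normB _ _) _; rewrite normrM ger0_norm.
Qed.

Lemma ler_dist_sum n (Q : pred 'I_n) (F G H : 'I_n -> R) :
  (forall j, `|F j - G j| <= H j) ->
  `|\sum_(j | Q j) F j - \sum_(j | Q j) G j| <= \sum_j H j.
Proof.
move=> FGH; rewrite -sumrB; apply: le_trans (ler_norm_sum _ _ _) _.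
apply: le_trans (ler_sum _ (fun j _ => FGH j)) _.
rewrite [leRHS](bigID Q) lerDl sumr_ge0 // => j _.
exact: le_trans (normr_ge0 _) (FGH j).
Qed.

End RealInequalities.

Section Weights.
Variables (R : realType) (m : nat).
Implicit Types x z : R.

Lemma wgt_ge0 j x : 0 <= wgt m j x.
Proof. exact: pos_part_ge0. Qed.

Lemma wgt_le1 j x : wgt m j x <= 1.
Proof. by rewrite /wgt /pos_part ge_max ler01 andbT gerBl. Qed.

Lemma ler_dist_wgt j x z : `|wgt m j x - wgt m j z| <= m%:R * `|x - z|.
Proof.
apply: le_trans (ler_dist_pos_part _ _) _.
rewrite opprB addrC addrA subrK; apply: le_trans (ler_dist_dist _ _) _.
by rewrite opprB addrA subrK -mulrBr normrM ger0_norm // distrC.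
Qed.

Lemma wgt_neq0 j x : 0 <= x -> wgt m j x != 0 ->
  j \in [:: Num.truncn (m%:R * x); (Num.truncn (m%:R * x)).+1].
Proof.
move=> x0 wj0; have /andP[lek ltk] := truncn_itv (mulr_ge0 (ler0n R m) x0).
have : `|m%:R * x - j%:R| < 1.
  rewrite ltNge; apply: contra wj0 => ?.
  by rewrite /wgt /pos_part max_r // subr_le0.
rewrite ltr_norml => /andP[h1 h2].
have : (Num.truncn (m%:R * x) <= j)%N by rewrite -ltnS -(ltr_nat R) -natr1; lra.
have : (j < (Num.truncn (m%:R * x)).+2)%N by rewrite -(ltr_nat R) -!natr1; lra.
by rewrite !inE; lia.
Qed.

Lemma sum_dist_wgt_le x z : 0 <= x -> 0 <= z ->
  \sum_(j < m.+1) `|wgt m j x - wgt m j z| <= 4 * m%:R * `|x - z|.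
Proof.
move=> x0 z0; set L := m%:R * `|x - z|.
set s := [:: Num.truncn (m%:R * x); (Num.truncn (m%:R * x)).+1]
      ++ [:: Num.truncn (m%:R * z); (Num.truncn (m%:R * z)).+1].
have near_s j : `|wgt m j x - wgt m j z| <= L * (j \in s)%:R.
  have [js|] := boolP (j \in s); first by rewrite mulr1 ler_dist_wgt.
  rewrite mem_cat negb_or => /andP[jx jz].
  have /eqP -> := contraNT (wgt_neq0 x0) jx.
  have /eqP -> := contraNT (wgt_neq0 z0) jz.
  by rewrite subrr normr0 mulr0.
apply: (le_trans (y := \sum_(j < m.+1) L * ((j : nat) \in s)%:R)).
  by apply: ler_sum => j _; exact: near_s.
rewrite -mulr_sumr -mulrA [4 * _]mulrC ler_wpM2l ?mulr_ge0 //.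
exact: sum_mem_le.
Qed.

End Weights.

Section BoundedMeasurable.
Variables (d : measure_display) (T : measurableType d) (R : realType).
Implicit Types f g : T -> R.

Definition bounded_measurable f :=
  measurable_fun setT f /\ exists M, forall t, `|f t| <= M.

Lemma bounded_measurable_cst c : bounded_measurable (fun=> c).
Proof. by split; [exact: measurable_cst | exists `|c|]. Qed.

Lemma bounded_measurable_01 f : measurable_fun setT f ->
  (forall t, 0 <= f t <= 1) -> bounded_measurable f.
Proof.
by move=> mf f01; split => //; exists 1 => t; case/andP: (f01 t) => *; rewrite ger0_norm.
Qed.

Lemma bounded_measurableD f g : bounded_measurable f -> bounded_measurable g ->
  bounded_measurable (fun t => f t + g t).
Proof.
move=> [mf [M fM]] [mg [N gN]]; split; first exact: measurable_realfun.measurable_funD.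
by exists (M + N) => t; apply: le_trans (ler_normD _ _) (lerD (fM t) (gN t)).
Qed.

Lemma bounded_measurableB f g : bounded_measurable f -> bounded_measurable g ->
  bounded_measurable (fun t => f t - g t).
Proof.
move=> [mf [M fM]] [mg [N gN]]; split; first exact: measurable_realfun.measurable_funB.
by exists (M + N) => t; apply: le_trans (ler_normB _ _) (lerD (fM t) (gN t)).
Qed.

Lemma bounded_measurableM f g : bounded_measurable f -> bounded_measurable g ->
  bounded_measurable (fun t => f t * g t).
Proof.
move=> [mf [M fM]] [mg [N gN]]; split; first exact: measurable_realfun.measurable_funM.
by exists (M * N) => t; rewrite normrM ler_pM.
Qed.

Lemma bounded_measurable_norm f : bounded_measurable f ->
  bounded_measurable (fun t => `|f t|).
Proof.
move=> [mf [M fM]]; split; last by exists M => t; rewrite normr_id.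
by apply: measurableT_comp => //; exact: measurable_realfun.normr_measurable.
Qed.

Lemma bounded_measurable_sum n (F : 'I_n -> T -> R) :
  (forall j, bounded_measurable (F j)) ->
  bounded_measurable (fun t => \sum_(j < n) F j t).
Proof.
elim: n F => [|n IH] F bF.
  by under eq_fun do rewrite big_ord0; exact: bounded_measurable_cst.
under eq_fun do rewrite big_ord_recr /=.
by apply: bounded_measurableD => //; apply: IH.
Qed.

Lemma bounded_measurable_wgt m j p : measurable_fun setT p ->
  bounded_measurable (fun t => wgt m j (p t)).
Proof.
move=> mp; split; last by exists 1 => t; rewrite ger0_norm ?wgt_ge0 ?wgt_le1.
apply: measurable_realfun.measurable_maxr; last exact: measurable_cst.
apply: measurable_realfun.measurable_funB; first exact: measurable_cst.
apply: measurableT_comp; first exact: measurable_realfun.normr_measurable.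
apply: measurable_realfun.measurable_funB; last exact: measurable_cst.
by apply: measurable_realfun.measurable_funM => //; exact: measurable_cst.
Qed.

End BoundedMeasurable.

Section Expectation.
Variables (d : measure_display) (T : measurableType d) (R : realType)
  (P : probability T R).
Implicit Types f g h : T -> R.

Lemma bounded_measurable_integrable f : bounded_measurable f ->
  P.-integrable setT (EFin \o f).
Proof.
case=> mf [M fM]; apply: measurable_bounded_integrable => //.
  by rewrite [X in (X < _)%E]probability_setT ltry.
exists M; split; first exact: num_real.
by move=> N MN t _ /=; apply: le_trans (fM t) (ltW MN).
Qed.

Lemma Exp_ge0 f : (forall t, 0 <= f t) -> 0 <= Exp P f.
Proof. by move=> f0; apply: Rintegral_ge0. Qed.

Lemma ler_Exp f g : bounded_measurable f -> bounded_measurable g ->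
  (forall t, f t <= g t) -> Exp P f <= Exp P g.
Proof.
by move=> bf bg fg; apply: le_Rintegral => //; exact: bounded_measurable_integrable.
Qed.

Lemma ExpD f g : bounded_measurable f -> bounded_measurable g ->
  Exp P (fun t => f t + g t) = Exp P f + Exp P g.
Proof. by move=> bf bg; apply: RintegralD => //; exact: bounded_measurable_integrable. Qed.

Lemma ExpB f g : bounded_measurable f -> bounded_measurable g ->
  Exp P (fun t => f t - g t) = Exp P f - Exp P g.
Proof. by move=> bf bg; apply: RintegralB => //; exact: bounded_measurable_integrable. Qed.

Lemma ExpZl c f : bounded_measurable f -> Exp P (fun t => c * f t) = c * Exp P f.
Proof. by move=> bf; apply: RintegralZl => //; exact: bounded_measurable_integrable. Qed.

Lemma Exp_sum n (F : 'I_n -> T -> R) : (forall j, bounded_measurable (F j)) ->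
  Exp P (fun t => \sum_(j < n) F j t) = \sum_(j < n) Exp P (F j).
Proof.
elim: n F => [|n IH] F bF.
  by under eq_fun do rewrite big_ord0; rewrite big_ord0 /Exp Rintegral_cst // mul0r.
under eq_fun do rewrite big_ord_recr /=.
rewrite ExpD ?IH ?big_ord_recr //.
by apply: bounded_measurable_sum => j.
Qed.

Lemma ler_dist_Exp f g h :
  bounded_measurable f -> bounded_measurable g -> bounded_measurable h ->
  (forall t, `|f t - g t| <= h t) -> `|Exp P f - Exp P g| <= Exp P h.
Proof.
move=> bf bg bh fgh; have bfg := bounded_measurableB bf bg.
rewrite -ExpB //; apply: le_trans (le_normr_Rintegral _ _) _ => //.
  exact: bounded_measurable_integrable.
exact: ler_Exp (bounded_measurable_norm bfg) bh fgh.
Qed.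

End Expectation.

Section SCDL_Lipschitz.
Variables (d : measure_display) (T : measurableType d) (R : realType)
  (P : probability T R) (y : T -> R) (m : nat).
Hypotheses (my : measurable_fun setT y) (y01 : forall t, 0 <= y t <= 1).

Definition SCDL_at (p : T -> R) (i : nat) : R :=
  \sum_(j < m.+1 | (j <= i)%N)
     pi_ P p m j * pos_part (q_ P p y m j - i.+1%:R / m%:R)
  + \sum_(j < m.+1 | (i < j)%N)
     pi_ P p m j * pos_part (i%:R / m%:R - q_ P p y m j).

Lemma SCDLE p : SCDL P p y m = \big[Num.max/0]_(i < m.+1) SCDL_at p i.
Proof. by []. Qed.

Definition pi_q (p : T -> R) (j : nat) : R := Exp P (fun t => wgt m j (p t) * y t).

Lemma bounded_measurable_y : bounded_measurable y.
Proof. exact: bounded_measurable_01. Qed.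

Lemma pi_q_itv p j : measurable_fun setT p -> 0 <= pi_q p j <= pi_ P p m j.
Proof.
move=> mp; have bw := bounded_measurable_wgt m j mp.
rewrite Exp_ge0 => [|t]; last by rewrite mulr_ge0 ?wgt_ge0 //; case/andP: (y01 t).
apply: ler_Exp (bounded_measurableM bw bounded_measurable_y) bw _ => t.
by rewrite ler_piMr ?wgt_ge0 //; case/andP: (y01 t).
Qed.

Lemma pi_mulq p j : measurable_fun setT p -> pi_ P p m j * q_ P p y m j = pi_q p j.
Proof. by move=> mp; apply: mulr_ratio; exact: pi_q_itv. Qed.

Lemma pi_ge0 p j : 0 <= pi_ P p m j.
Proof. by apply: Exp_ge0 => t; exact: wgt_ge0. Qed.

Lemma pi_pos_part_qB p j c : measurable_fun setT p ->
  pi_ P p m j * pos_part (q_ P p y m j - c) = pos_part (pi_q p j - c * pi_ P p m j).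
Proof. by move=> mp; rewrite pos_partMl ?pi_ge0 // mulrBr pi_mulq // mulrC. Qed.

Lemma pi_pos_part_Bq p j c : measurable_fun setT p ->
  pi_ P p m j * pos_part (c - q_ P p y m j) = pos_part (- (pi_q p j - c * pi_ P p m j)).
Proof. by move=> mp; rewrite pos_partMl ?pi_ge0 // mulrBr pi_mulq // mulrC opprB. Qed.

Variables p1 p2 : T -> R.
Hypotheses (mp1 : measurable_fun setT p1) (mp2 : measurable_fun setT p2).
Hypotheses (p1_01 : forall t, 0 <= p1 t <= 1) (p2_01 : forall t, 0 <= p2 t <= 1).

Definition dwgt (j : nat) (t : T) : R := `|wgt m j (p1 t) - wgt m j (p2 t)|.

Lemma bounded_measurable_dwgt j : bounded_measurable (dwgt j).
Proof.
apply: bounded_measurable_norm.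
by apply: bounded_measurableB; exact: bounded_measurable_wgt.
Qed.

Lemma dist_pi_le j : `|pi_ P p1 m j - pi_ P p2 m j| <= Exp P (dwgt j).
Proof.
apply: ler_dist_Exp => //; last exact: bounded_measurable_dwgt.
all: exact: bounded_measurable_wgt.
Qed.

Lemma dist_pi_q_le j : `|pi_q p1 j - pi_q p2 j| <= Exp P (dwgt j).
Proof.
apply: ler_dist_Exp => [|||t]; try exact: bounded_measurable_dwgt.
1,2: by apply: bounded_measurableM; [exact: bounded_measurable_wgt | exact: bounded_measurable_y].
rewrite -mulrBl normrM ler_piMr //; have /andP[y0 y1] := y01 t.
by rewrite ger0_norm.
Qed.

Lemma dist_pi_lin_le j c : 0 <= c <= 2 ->
  `|(pi_q p1 j - c * pi_ P p1 m j) - (pi_q p2 j - c * pi_ P p2 m j)|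
    <= 3 * Exp P (dwgt j).
Proof.
case/andP=> c0 c2; apply: le_trans (ler_dist_BM _ _ _ _ c0) _.
have := dist_pi_q_le j; have := ler_wpM2l c0 (dist_pi_le j).
have : 0 <= Exp P (dwgt j) by apply: Exp_ge0 => t; exact: normr_ge0.
nra.
Qed.

Hypothesis m_gt0 : (0 < m)%N.

Lemma ratio_itv k : (k <= m.+1)%N -> 0 <= (k%:R / m%:R : R) <= 2.
Proof.
move=> km; rewrite divr_ge0 //= ler_pdivrMr ?ltr0n // -natrM ler_nat; lia.
Qed.

Lemma dist_SCDL_at_le i : (i <= m)%N ->
  `|SCDL_at p1 i - SCDL_at p2 i| <= 6 * \sum_(j < m.+1) Exp P (dwgt j).
Proof.
move=> im; rewrite /SCDL_at opprD addrACA; apply: le_trans (ler_normD _ _) _.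
have -> : 6 = 3 + 3 :> R by rewrite -natrD.
rewrite mulrDl; apply: lerD; rewrite mulr_sumr; apply: ler_dist_sum => j.
- rewrite !pi_pos_part_qB //; apply: le_trans (ler_dist_pos_part _ _) _.
  exact/dist_pi_lin_le/ratio_itv.
- rewrite !pi_pos_part_Bq //; apply: le_trans (ler_dist_pos_part _ _) _.
  by rewrite -opprD normrN; apply/dist_pi_lin_le/ratio_itv; lia.
Qed.

Lemma sum_Exp_dwgt_le :
  \sum_(j < m.+1) Exp P (dwgt j) <= 4 * m%:R * Exp P (fun t => `|p1 t - p2 t|).
Proof.
have bdp : bounded_measurable (fun t => `|p1 t - p2 t|).
  by apply/bounded_measurable_norm/bounded_measurableB; exact: bounded_measurable_01.
rewrite -Exp_sum; last exact: bounded_measurable_dwgt.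
rewrite -ExpZl //; apply: ler_Exp => [||t].
- by apply: bounded_measurable_sum; exact: bounded_measurable_dwgt.
- by apply: bounded_measurableM => //; exact: bounded_measurable_cst.
apply: sum_dist_wgt_le; [by case/andP: (p1_01 t) | by case/andP: (p2_01 t)].
Qed.

Lemma SCDL_lipschitz :
  `|SCDL P p1 y m - SCDL P p2 y m| <= 24 * m%:R * Exp P (fun t => `|p1 t - p2 t|).
Proof.
set S := \sum_(j < m.+1) Exp P (dwgt j).
have S_ge0 : 0 <= S by apply: sumr_ge0 => j _; apply: Exp_ge0 => t; exact: normr_ge0.
rewrite !SCDLE; apply: (@le_trans _ _ (6 * S)).
  apply: ler_dist_bigmax => [|i]; first by rewrite mulr_ge0.
  by apply: dist_SCDL_at_le; rewrite -ltnS.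
have -> : 24 = 6 * 4 :> R by rewrite -natrM.
rewrite -!mulrA ler_wpM2l // mulrA.
exact: sum_Exp_dwgt_le.
Qed.

End SCDL_Lipschitz.

Theorem lemma5p2 (R : realType) :
  exists C : R, 0 < C /\
  forall (d : measure_display) (T : measurableType d) (P : probability T R)
         (p1 p2 y : T -> R),
    measurable_fun setT p1 -> measurable_fun setT p2 -> measurable_fun setT y ->
    (forall t, 0 <= p1 t <= 1) -> (forall t, 0 <= p2 t <= 1) ->
    (forall t, y t = 0 \/ y t = 1) ->
    forall m : nat, (0 < m)%N ->
      `|SCDL P p1 y m - SCDL P p2 y m|
        <= C * m%:R * Exp P (fun t => `|p1 t - p2 t|).
Proof.
exists 24; split => // d T P p1 p2 y mp1 mp2 my p1_01 p2_01 y_bool m m_gt0.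
by apply: SCDL_lipschitz => // t; case: (y_bool t) => ->; rewrite lexx ler01.
Qed.
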